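(* Let $L$ be a positive integer and let $(\mathbf{F},\mathbf{G})$ be an eigencomplementary pair of matrices $\mathbf{F},\mathbf{G}\in\mathbb{R}^{L\times L}$. Then: (1) if $\mathbf{F}$ is regular (invertible), then $\mathbf{F}^{-1}\mathbf{G}$ is negative semi-definite; (2) if $\mathbf{G}$ is regular, then $\mathbf{F}\mathbf{G}^{-1}$ is negative semi-definite.
   Context: A pair $(\mathbf{F},\mathbf{G})$ of real symmetric $L\times L$ matrices is called eigencomplementary if $\mathbf{F}$ is negative semi-definite, $\mathbf{G}$ is positive semi-definite, $\mathbf{F}$ and $\mathbf{G}$ have a common basis of eigenvectors of $\mathbb{R}^L$, and, in the case that $\mathbf{F}$ and $\mathbf{G}$ are both singular, additionally $\bigoplus_{\xi\in\sigma(\mathbf{F}),\,\xi<0}\operatorname{Eig}_{\mathbf{F}}(\xi)=\operatorname{Eig}_{\mathbf{G}}(0)$, where $\sigma(\cdot)$ denotes the spectrum and $\operatorname{Eig}_{\mathbf{M}}(\xi)$ the eigenspace of $\mathbf{M}$ for the eigenvalue $\xi$. *)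

(* real numbers rendered as an arbitrary real closed field. *)
From HB Require Import structures.
From mathcomp Require Import all_boot all_order all_algebra.
From mathcomp Require Import polyrcf.
Set Implicit Arguments. Unset Strict Implicit. Unset Printing Implicit Defensive.
Import Order.TTheory GRing.Theory Num.Theory.
Local Open Scope ring_scope.

Section Defs.
Variable R : rcfType.

Definition symmetric_mx L (A : 'M[R]_L) : Prop := A^T = A.

Definition psd_mx L (A : 'M[R]_L) : Prop :=
  symmetric_mx A /\ forall v : 'cV[R]_L, 0 <= (v^T *m A *m v) 0 0.
Definition nsd_mx L (A : 'M[R]_L) : Prop :=
  symmetric_mx A /\ forall v : 'cV[R]_L, (v^T *m A *m v) 0 0 <= 0.

Definition spectrum L (A : 'M[R]_L) : seq R := rootsR (char_poly A).

(* a common basis of eigenvectors of R^L: the rows of an invertible matrix P,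
   each of which is an eigenvector of both F and G *)
Definition common_eigenbasis L (F G : 'M[R]_L) : Prop :=
  exists P : 'M[R]_L, P \in unitmx /\
    forall i : 'I_L, exists a b : R,
      row i P *m F = a *: row i P /\ row i P *m G = b *: row i P.

Definition neg_eigensum L (F : 'M[R]_L) : 'M[R]_L :=
  (\sum_(xi <- spectrum F | (xi < 0)%R) eigenspace F xi)%MS.

Definition eigencomplementary L (F G : 'M[R]_L) : Prop :=
  [/\ symmetric_mx F /\ symmetric_mx G, nsd_mx F, psd_mx G,
      common_eigenbasis F G &
      (F \notin unitmx -> G \notin unitmx ->
         (neg_eigensum F == eigenspace G 0)%MS)].
End Defs.

(** Let the rows [p_i] of an invertible [P] be common eigenvectors,
    [p_i F = a_i p_i] and [p_i G = b_i p_i].  Testing the semi-definiteness of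
    [F] and [G] on [p_i] gives [a_i <= 0 <= b_i], and since [F] and [G] are
    simultaneously diagonalised by [P] they commute, so [F^-1 G] is symmetric
    with eigenbasis [P] and eigenvalues [b_i / a_i <= 0] (and likewise for
    [F G^-1]); the eigenspace condition of the singular case plays no role.
    A symmetric [X] with [P X = D P], [D] diagonal and [D <= 0], is
    negative semi-definite even though [P] need not be orthogonal: symmetry of
    [P X P^T = D (P P^T)] makes [D] commute with [P P^T], which yields
    [D (P P^T) = - (S P) (S P)^T] for [S = sqrt (- D)].  Writing [v^T = c P]
    then gives [v^T X v = - |c S P|^2]. *)
From HB Require Import structures.
From mathcomp Require Import all_boot all_order all_algebra.
From mathcomp Require Import polyrcf.
Import Order.TTheory GRing.Theory Num.Theory.
Local Open Scope ring_scope.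

Section SquaredNorm.
Context {R : realDomainType} {n : nat}.
Implicit Type u : 'rV[R]_n.

Lemma sqnorm_row_ge0 u : 0 <= (u *m u^T) 0 0.
Proof. by rewrite mxE sumr_ge0 // => k _; rewrite mxE -expr2 sqr_ge0. Qed.

Lemma sqnorm_row_gt0 u : u != 0 -> 0 < (u *m u^T) 0 0.
Proof.
move=> u_neq0; rewrite lt0r sqnorm_row_ge0 andbT; apply: contra u_neq0.
have uk2_ge0 k : 0 <= u 0 k * u^T k 0 by rewrite mxE -expr2 sqr_ge0.
rewrite mxE => /eqP /psumr_eq0P u0.
apply/eqP/rowP => k; have /eqP := u0 (fun i _ => uk2_ge0 i) k isT.
by rewrite !mxE mulf_eq0 orbb => /eqP.
Qed.

End SquaredNorm.

Section RowEigenbasis.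
Context {R : fieldType} {n : nat}.
Implicit Types (A B M P : 'M[R]_n) (p : 'rV[R]_n) (e : 'I_n -> R).

Lemma row_unitmx_neq0 [P] i : P \in unitmx -> row i P != 0.
Proof.
move=> uP; apply/eqP => Pi0.
have := congr1 (row i) (mulmxV uP); rewrite row_mul Pi0 mul0mx.
by move/rowP/(_ i); rewrite !mxE eqxx => /eqP; rewrite eq_sym oner_eq0.
Qed.

Lemma mulmx_row_eigenbasis A P e :
  (forall i, row i P *m A = e i *: row i P) ->
  P *m A = diag_mx (\row_i e i) *m P.
Proof.
move=> PA; apply/row_matrixP => i; rewrite row_mul PA mul_diag_mx.
by apply/rowP => j; rewrite !mxE.
Qed.

Lemma comm_row_eigenbasis [A B P a b] : P \in unitmx ->
  (forall i, row i P *m A = a i *: row i P) ->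
  (forall i, row i P *m B = b i *: row i P) -> comm_mx A B.
Proof.
move=> uP /mulmx_row_eigenbasis PA /mulmx_row_eigenbasis PB.
apply: (can_inj (mulKmx uP)); rewrite !mulmxA PA PB -!mulmxA PA PB.
by rewrite !mulmxA diag_mxC.
Qed.

Lemma comm_invmx [A B] : A \in unitmx -> comm_mx A B -> comm_mx (invmx A) B.
Proof.
move=> uA AB; apply: (canRL (mulmxK uA)).
by rewrite -mulmxA -AB mulmxA mulVmx // mul1mx.
Qed.

Lemma eigenvector_invmx [A p a] : A \in unitmx -> p != 0 ->
  p *m A = a *: p -> p *m invmx A = a^-1 *: p.
Proof.
move=> uA p_neq0 pA; have a_neq0 : a != 0.
  apply: contra p_neq0 => /eqP a0.
  by rewrite -(mulmxK uA p) pA a0 scale0r mul0mx.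
by rewrite -{2}(mulmxK uA p) pA -scalemxAl scalerA mulVf // scale1r.
Qed.

Lemma comm_diag_mx_eq [d : 'rV[R]_n] [M i j] :
  comm_mx (diag_mx d) M -> M i j != 0 -> d 0 i = d 0 j.
Proof.
move=> /matrixP/(_ i j); rewrite mul_diag_mx mul_mx_diag !mxE => dM Mij_neq0.
by apply: (mulIf Mij_neq0); rewrite dM mulrC.
Qed.

End RowEigenbasis.

Section NegSemiDefinite.
Context {R : rcfType} {n : nat}.
Implicit Types (A B M P X : 'M[R]_n) (p : 'rV[R]_n) (e : 'I_n -> R).

Lemma nsd_eigenvalue_le0 [A p a] :
  nsd_mx A -> p != 0 -> p *m A = a *: p -> a <= 0.
Proof.
move=> [_ A_le0] p_neq0 pA; have := A_le0 p^T.
by rewrite trmxK pA -scalemxAl mxE pmulr_lle0 // sqnorm_row_gt0.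
Qed.

Lemma psd_eigenvalue_ge0 [A p a] :
  psd_mx A -> p != 0 -> p *m A = a *: p -> 0 <= a.
Proof.
move=> [_ A_ge0] p_neq0 pA; have := A_ge0 p^T.
by rewrite trmxK pA -scalemxAl mxE pmulr_lge0 // sqnorm_row_gt0.
Qed.

Lemma comm_diag_mx_neg_sqrt e M : (forall i, e i <= 0) ->
  comm_mx (diag_mx (\row_i e i)) M ->
  let S := diag_mx (\row_i Num.sqrt (- e i)) in
  diag_mx (\row_i e i) *m M = - (S *m M *m S).
Proof.
move=> e_le0 DM /=; apply/matrixP => i j.
rewrite mul_diag_mx mul_mx_diag mul_diag_mx !mxE.
have [->|Mij_neq0] := eqVneq (M i j) 0; first by rewrite !(mulr0, mul0r) oppr0.
have := comm_diag_mx_eq DM Mij_neq0; rewrite !mxE => <-.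
by rewrite mulrAC -expr2 sqr_sqrtr ?oppr_ge0 // mulNr opprK.
Qed.

Lemma nsd_row_eigenbasis [X P e] : symmetric_mx X -> P \in unitmx ->
  (forall i, row i P *m X = e i *: row i P) -> (forall i, e i <= 0) ->
  nsd_mx X.
Proof.
move=> sX uP /mulmx_row_eigenbasis PX e_le0; split=> // v.
set D := diag_mx _ in PX; set M := P *m P^T.
have DM : comm_mx D M.
  have DM_PXPt : D *m M = P *m X *m P^T by rewrite PX mulmxA.
  have := congr1 trmx DM_PXPt; rewrite !trmx_mul trmxK sX mulmxA -DM_PXPt.
  by rewrite /comm_mx tr_diag_mx => ->.
set c := v^T *m invmx P; pose S := diag_mx (\row_i Num.sqrt (- e i)).
have vtE : v^T = c *m P by rewrite mulmxKV.
have vE : v = P^T *m c^T by rewrite -trmx_mul -vtE trmxK.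
have -> : v^T *m X *m v = c *m (D *m M) *m c^T.
  by rewrite vtE vE !mulmxA -(mulmxA c P) PX !mulmxA.
rewrite comm_diag_mx_neg_sqrt // -/S.
have -> : c *m - (S *m M *m S) *m c^T = - (c *m S *m P *m (c *m S *m P)^T).
  by rewrite !trmx_mul tr_diag_mx mulmxN mulNmx !mulmxA.
by rewrite mxE oppr_le0 sqnorm_row_ge0.
Qed.

Lemma nsd_invmx_mul [A B P a b] :
  symmetric_mx A -> symmetric_mx B -> P \in unitmx ->
  (forall i, row i P *m A = a i *: row i P) ->
  (forall i, row i P *m B = b i *: row i P) ->
  A \in unitmx -> (forall i, b i / a i <= 0) -> nsd_mx (invmx A *m B).
Proof.
move=> sA sB uP PA PB uA ba_le0.
have AiB := comm_invmx uA (comm_row_eigenbasis uP PA PB).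
apply: (nsd_row_eigenbasis _ uP _ ba_le0) => [|i].
  by rewrite /symmetric_mx trmx_mul trmx_inv sA sB AiB.
rewrite mulmxA (eigenvector_invmx uA (row_unitmx_neq0 i uP) (PA i)).
by rewrite -scalemxAl PB scalerA mulrC.
Qed.

End NegSemiDefinite.

Lemma common_eigenbasis_fun (R : rcfType) n (F G : 'M[R]_n) :
  common_eigenbasis F G ->
  exists P, exists a b : 'I_n -> R, [/\ P \in unitmx,
    forall i, row i P *m F = a i *: row i P &
    forall i, row i P *m G = b i *: row i P].
Proof.
move=> [P [uP /(fin_all_exists (U := fun=> R)) [a /fin_all_exists [b PFG]]]].
by exists P, a, b; split=> // i; case: (PFG i).
Qed.

Theorem lemma2p5 (R : rcfType) (L : nat) (hL : (0 < L)%N) (F G : 'M[R]_L) :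
  eigencomplementary F G ->
  (F \in unitmx -> nsd_mx (invmx F *m G)) /\
  (G \in unitmx -> nsd_mx (F *m invmx G)).
Proof.
move=> [[sF sG] nsdF psdG /common_eigenbasis_fun [P [a [b [uP PF PG]]]] _].
have a_le0 i : a i <= 0.
  exact: nsd_eigenvalue_le0 nsdF (row_unitmx_neq0 i uP) (PF i).
have b_ge0 i : 0 <= b i.
  exact: psd_eigenvalue_ge0 psdG (row_unitmx_neq0 i uP) (PG i).
split=> [uF | uG].
  apply: (nsd_invmx_mul sF sG uP PF PG uF) => i.
  by rewrite mulr_ge0_le0 ?invr_le0.
rewrite -(comm_invmx uG (comm_row_eigenbasis uP PG PF)).
apply: (nsd_invmx_mul sG sF uP PG PF uG) => i.
by rewrite mulr_le0_ge0 ?invr_ge0.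
Qed.
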